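(* In the setting below, the error $e^k=\tilde q_\gamma^k-q_\gamma^k$ of the regularized block Kaczmarz method satisfies, with $\delta_\gamma=\|A^*M_\gamma(\tilde p-p)\|$: (i) if $2\le k\le 2\sigma_\gamma^{-2}$, then $\displaystyle \|e^k\|\le \frac{\delta_\gamma\sigma_\gamma^2}{2\big(1-(1-\sigma_\gamma^2)^{1/2}\big)}\,k$; (ii) if $k>2\sigma_\gamma^{-2}$, then $\displaystyle \|e^k\|\le \frac{\delta_\gamma}{1-(1-\sigma_\gamma^2)^{1/2}}$. Setting: $A_j\in\mathbb{C}^{r_j\times n}$ ($j=1,\dots,m$), $A=\begin{bmatrix}A_1\\ \vdots\\ A_m\end{bmatrix}$ of full row rank, $\gamma>0$, $D_\gamma=\operatorname{diag}(\gamma I+A_1A_1^*,\dots,\gamma I+A_mA_m^* )$, $L$ the strictly block lower triangular matrix with $(i,j)$ block $A_iA_j^*$ for $i>j$, $M_\gamma=(D_\gamma+L)^{-1}$, $R_\gamma=(D_{2\gamma})^{1/2}M_\gamma A$ ($D_{2\gamma}$ = $D_\gamma$ with $\gamma$ replaced by $2\gamma$), $\sigma_\gamma$ the smallest nonzero singular value of $R_\gamma$; $q_\gamma^k$, $\tilde q_\gamma^k$ are the iterates, starting from $0$, of $q^{k+1}=(I-A^*M_\gamma A)q^k+A^*M_\gamma p$ with data $p$, respectively $\tilde p$ (equivalently, of the regularized block Kaczmarz sweep $q_j=q_{j-1}+A_j^*(\gamma I+A_jA_j^* )^{-1}(p_j-A_jq_{j-1})$, $j=1,\dots,m$).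
   Context: $A^*$ is the conjugate transpose; norms are Euclidean / operator 2-norms; $(D_{2\gamma})^{1/2}$ is the Hermitian positive definite square root; $0<\sigma_\gamma\le1$. *)

From HB Require Import structures.
From mathcomp Require Import all_boot all_order all_algebra.
From mathcomp Require Import sesquilinear spectral.
Set Implicit Arguments. Unset Strict Implicit. Unset Printing Implicit Defensive.
Import Order.TTheory GRing.Theory Num.Theory.
Local Open Scope ring_scope.
Local Open Scope sesquilinear_scope.

(* Conjugate transpose: A^H = A ^t star (i.e. (A^T) ^ conjC), from spectral.v. *)
Definition ctmx (C : numClosedFieldType) m n (A : 'M[C]_(m, n)) : 'M[C]_(n, m) :=
  A ^t*.

Definition vnorm (C : numClosedFieldType) n (v : 'cV[C]_n) : C :=
  sqrtC (\sum_(i < n) `|v i 0| ^+ 2).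

Definition herm_posdef (C : numClosedFieldType) N (S : 'M[C]_N) : Prop :=
  ctmx S = S /\ forall v : 'cV[C]_N, v != 0 -> 0 < (ctmx v *m S *m v) 0 0.

(* s is the smallest nonzero singular value of R, singular values being the
   nonnegative square roots of the eigenvalues of R^H R. *)
Definition smallest_nonzero_sv (C : numClosedFieldType) N n (R : 'M[C]_(N, n))
    (s : C) : Prop :=
  [/\ 0 < s, eigenvalue (ctmx R *m R) (s ^+ 2)
    & forall t : C, 0 < t -> eigenvalue (ctmx R *m R) (t ^+ 2) -> s <= t].

Section BlockKaczmarz.
Variables (C : numClosedFieldType) (m n : nat) (r : 'I_m -> nat).
Variable Ab : forall j : 'I_m, 'M[C]_(r j, n).

Definition stackA : 'M[C]_(\sum_j r j, n) := \mxcol_(j < m) Ab j.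

Definition Dg (g : C) : 'M[C]_(\sum_j r j) :=
  \mxdiag_(j < m) (g%:M + Ab j *m ctmx (Ab j)).

Definition Lblk : 'M[C]_(\sum_j r j) :=
  \mxblock_(i < m, j < m) (if (j < i)%N then Ab i *m ctmx (Ab j) else 0).

Definition Mg (g : C) : 'M[C]_(\sum_j r j) := invmx (Dg g + Lblk).

Fixpoint rbk_iter (g : C) (p : 'cV[C]_(\sum_j r j)) (k : nat) : 'cV[C]_n :=
  match k with
  | 0 => 0
  | k'.+1 => (1%:M - ctmx stackA *m Mg g *m stackA) *m rbk_iter g p k'
             + ctmx stackA *m Mg g *m p
  end.
End BlockKaczmarz.

(* Write K = D_g + L, so that M_g = K^-1, and T = I - A^* K^-1 A.  The error
   e^k = q~^k - q^k satisfies e^0 = 0 and e^(k+1) = T e^k + A^* M_g (p~ - p),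
   hence every e^k lies in the range of A^*.  The argument has three parts:
   1. Splitting: K + K^* = D_(2g) + A A^* = S^2 + A A^*.  For any K, S, A
      with this property, T^* T = I - R^* R where R = S K^-1 A, so that
      ||T x||^2 = ||x||^2 - ||R x||^2.
   2. Singular values: ||R x||^2 >= sigma^2 ||x||^2 for x orthogonal to
      ker R = ker A (spectral decomposition of R^* R), in particular for x in
      the range of A^*.  So T contracts that range by rho = (1 - sigma^2)^(1/2)
      and ||e^(k+1)|| <= rho ||e^k|| + delta.
   3. Scalar recursions a_(k+1) <= rho a_k + delta, a_0 = 0, satisfy
      a_k <= delta / (1 - rho) and, for k >= 2, a_k <= delta (1 + rho) k / 2;
      since sigma^2 = (1 - rho)(1 + rho) these are bounds (ii) and (i). *)

From HB Require Import structures.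
From mathcomp Require Import all_boot all_order all_algebra sesquilinear spectral.
From mathcomp Require Import ring.
Set Implicit Arguments. Unset Strict Implicit. Unset Printing Implicit Defensive.
Import Order.TTheory GRing.Theory Num.Theory.
Local Open Scope ring_scope.
Local Open Scope sesquilinear_scope.

Section SquaredNorm.
Variable C : numClosedFieldType.

Definition sqnorm n (x : 'cV[C]_n) : C := (x ^t* *m x) 0 0.

Lemma sqnormE n (x : 'cV[C]_n) : sqnorm x = \sum_(i < n) (x i 0)^* * x i 0.
Proof. by rewrite /sqnorm mxE; apply: eq_bigr => i _; rewrite !mxE. Qed.

Lemma sqnorm_ge0 n (x : 'cV[C]_n) : 0 <= sqnorm x.
Proof. by rewrite sqnormE sumr_ge0 // => i _; rewrite mulrC mul_conjC_ge0. Qed.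

Lemma sqnorm_eq0 n (x : 'cV[C]_n) : sqnorm x = 0 -> x = 0.
Proof.
rewrite sqnormE => sum0; apply/matrixP => i j; rewrite ord1 mxE.
have term_ge0 (k : 'I_n) : true -> 0 <= (x k 0)^* * x k 0.
  by rewrite mulrC mul_conjC_ge0.
have /eqP := psumr_eq0P term_ge0 sum0 (i := i) isT.
by rewrite mulrC mul_conjC_eq0 => /eqP.
Qed.

Lemma sqnorm_dotmx n (x : 'cV[C]_n) : sqnorm x = dotmx x^T x^T.
Proof. by rewrite sqnormE dotmxE mxE; apply: eq_bigr => i _; rewrite !mxE mulrC. Qed.

Lemma sqnormM m n (A : 'M[C]_(m, n)) (x : 'cV[C]_n) :
  sqnorm (A *m x) = (x ^t* *m (A ^t* *m A) *m x) 0 0.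
Proof. by rewrite /sqnorm trmx_mul map_mxM !mulmxA. Qed.

Lemma vnormE n (x : 'cV[C]_n) : vnorm x = sqrtC (sqnorm x).
Proof.
by rewrite /vnorm sqnormE; congr sqrtC; apply: eq_bigr => i _; rewrite normCK mulrC.
Qed.

Lemma vnorm_ge0 n (x : 'cV[C]_n) : 0 <= vnorm x.
Proof. by rewrite vnormE sqrtC_ge0 sqnorm_ge0. Qed.

Lemma vnormD n (x y : 'cV[C]_n) : vnorm (x + y) <= vnorm x + vnorm y.
Proof.
rewrite !vnormE !sqnorm_dotmx linearD /=.
exact: (triangle_lerif (@dotmx C n) x^T y^T).1.
Qed.

End SquaredNorm.

Section ConjugateTranspose.
Variable C : numClosedFieldType.

Lemma ctmxM m n p (A : 'M[C]_(m, n)) (B : 'M[C]_(n, p)) :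
  (A *m B) ^t* = B ^t* *m A ^t*.
Proof. by rewrite trmx_mul map_mxM. Qed.

Lemma ctmxD m n (A B : 'M[C]_(m, n)) : (A + B) ^t* = A ^t* + B ^t*.
Proof. by rewrite linearD map_mxD. Qed.

Lemma ctmxN m n (A : 'M[C]_(m, n)) : (- A) ^t* = - A ^t*.
Proof. by rewrite linearN map_mxN. Qed.

Lemma ctmx0 m n : (0 : 'M[C]_(m, n)) ^t* = 0.
Proof. by rewrite trmx0 map_mx0. Qed.

Lemma ctmx_scalar n (a : C) : a^* = a -> (a%:M : 'M[C]_n) ^t* = a%:M.
Proof. by move=> aR; rewrite tr_scalar_mx map_scalar_mx /= aR. Qed.

Lemma inj_unitmx N (B : 'M[C]_N) :
  (forall v : 'cV[C]_N, B *m v = 0 -> v = 0) -> B \in unitmx.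
Proof.
move=> Binj; rewrite -unitmx_tr -row_free_unit -kermx_eq0; apply/eqP.
apply/row_matrixP => i; rewrite row0.
have /eqP/(congr1 trmx) : row i (kermx B^T) *m B^T == 0 by rewrite -sub_kermx row_sub.
rewrite trmx_mul trmxK trmx0 => /Binj/(congr1 trmx).
by rewrite trmxK trmx0.
Qed.

Lemma posdef_inj N (S : 'M[C]_N) (v : 'cV[C]_N) :
  herm_posdef S -> S *m v = 0 -> v = 0.
Proof.
move=> [_ Spos] Sv; case: (eqVneq v 0) => // /Spos.
by rewrite -mulmxA Sv mulmx0 mxE ltxx.
Qed.

End ConjugateTranspose.

Section NormalSpectral.
Variables (C : numClosedFieldType) (n : nat) (H : 'M[C]_n).
Hypothesis H_normal : H \is normalmx.

Local Notation P := (spectralmx H).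
Local Notation d := (spectral_diag H).

Lemma spectral_eigenrow i : row i P *m H = d 0 i *: row i P.
Proof.
have /orthomx_spectralP Hdiag := H_normal.
have PH : P *m H = diag_mx d *m P.
  by have := congr1 (mulmx P) Hdiag; rewrite !mulmxA mulmxV ?spectral_unit // mul1mx.
by rewrite -row_mul PH mul_diag_mx; apply/rowP => k; rewrite !mxE.
Qed.

Lemma spectral_form (x : 'cV[C]_n) :
  (x ^t* *m H *m x) 0 0 = \sum_i ((P *m x) i 0)^* * d 0 i * (P *m x) i 0.
Proof.
have /orthomx_spectralP Hdiag := H_normal.
have -> : x ^t* *m H *m x = x ^t* *m (invmx P *m diag_mx d *m P) *m x.
  by rewrite -Hdiag.
rewrite invmx_unitary ?spectral_unitarymx // !mulmxA -ctmxM.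
rewrite -mulmxA mxE; apply: eq_bigr => i _.
by rewrite mul_mx_diag !mxE.
Qed.

(* The change of coordinates is unitary, hence preserves the norm. *)
Lemma sqnorm_spectral (x : 'cV[C]_n) : sqnorm (P *m x) = sqnorm x.
Proof.
have PtP : P ^t* *m P = 1%:M.
  by rewrite -invmx_unitary ?spectral_unitarymx // mulVmx ?spectral_unit.
by rewrite sqnormM PtP mulmx1.
Qed.

End NormalSpectral.

Section SmallestSingularValue.
Variables (C : numClosedFieldType) (N n : nat) (R : 'M[C]_(N, n)) (s : C).
Hypothesis svR : smallest_nonzero_sv R s.

Local Notation H := (R ^t* *m R).

(* The Gram matrix R^* R is Hermitian, hence normal and unitarily diagonalisable. *)
Lemma gram_normal : H \is normalmx.
Proof. by apply/normalmxP; rewrite ctmxM trmxCK. Qed.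

Lemma sv_sq_le_eigenvalue d : 0 < d -> eigenvalue H d -> s ^+ 2 <= d.
Proof.
case: svR => s_gt0 _ smin d_gt0; rewrite -{1}[d]sqrtCK => /smin.
rewrite sqrtC_gt0 => /(_ d_gt0) le_s.
by rewrite -[X in _ <= X]sqrtCK ler_sqr // nnegrE ?sqrtC_ge0 ?ltW.
Qed.

Lemma gram_eigenvalue_sqnorm (w : 'rV[C]_n) d :
  w *m H = d *: w -> dotmx w w = 1 -> d = sqnorm (R *m w ^t*).
Proof.
by move=> wH w1; rewrite sqnormM trmxCK wH -scalemxAl mxE -dotmxE w1 mulr1.
Qed.

Lemma sv_lower_bound (x : 'cV[C]_n) :
  (forall z : 'cV[C]_n, R *m z = 0 -> z ^t* *m x = 0) ->
  s ^+ 2 * sqnorm x <= sqnorm (R *m x).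
Proof.
move=> x_orth; have Hn := gram_normal.
rewrite sqnormM spectral_form // -(sqnorm_spectral H x) sqnormE mulr_sumr.
apply: ler_sum => i _; set P := spectralmx H; set u := P *m x.
set w := row i P; set di := spectral_diag H 0 i.
have wH : w *m H = di *: w by exact: spectral_eigenrow.
have w1 : dotmx w w = 1.
  by move/row_unitarymxP: (spectral_unitarymx H) => /(_ i i); rewrite eqxx.
have di_sq := gram_eigenvalue_sqnorm wH w1.
have ui_ge0 : 0 <= (u i 0)^* * u i 0 by rewrite mulrC mul_conjC_ge0.
case: (eqVneq di 0) => [di0 | di_neq0].
  have /x_orth : R *m w ^t* = 0 by apply: sqnorm_eq0; rewrite -di_sq.
  rewrite trmxCK => wx0.
  have -> : u i 0 = (w *m x) 0 0 by rewrite !mxE; apply: eq_bigr => k _; rewrite !mxE.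
  by rewrite wx0 mxE conjC0 !mul0r mulr0.
have di_gt0 : 0 < di by rewrite lt_def di_neq0 di_sq sqnorm_ge0.
have /sv_sq_le_eigenvalue : eigenvalue H di.
  apply/eigenvalueP; exists w => //; apply: contra_eqN w1 => /eqP ->.
  by rewrite dotmxE mul0mx mxE eq_sym oner_eq0.
move=> /(_ di_gt0) s_le.
by rewrite [X in _ <= X]mulrAC [X in _ <= X]mulrC ler_wpM2r.
Qed.

End SmallestSingularValue.

Section SplittingIteration.
Variables (C : numClosedFieldType) (N n : nat).
Variables (A : 'M[C]_(N, n)) (K S : 'M[C]_N).
Hypothesis S_herm : S ^t* = S.
Hypothesis S_inj : forall v : 'cV[C]_N, S *m v = 0 -> v = 0.
Hypothesis splitting : K + K ^t* = S *m S + A *m A ^t*.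

Local Notation T := (1%:M - A ^t* *m invmx K *m A).
Local Notation R := (S *m invmx K *m A).

(* K is invertible: if K v = 0 then ||S v||^2 + ||A^* v||^2 = v^*Kv + v^*K^*v = 0. *)
Lemma splitting_unit : K \in unitmx.
Proof.
apply: inj_unitmx => v Kv.
have : (v ^t* *m (K + K ^t*) *m v) 0 0 = 0.
  by rewrite mulmxDr mulmxDl -mulmxA Kv mulmx0 add0r -ctmxM Kv ctmx0 mul0mx mxE.
rewrite splitting mulmxDr mulmxDl mxE.
have -> : (v ^t* *m (S *m S) *m v) 0 0 = sqnorm (S *m v).
  by rewrite sqnormM S_herm mulmxA.
have -> : (v ^t* *m (A *m A ^t*) *m v) 0 0 = sqnorm (A ^t* *m v).
  by rewrite sqnormM trmxCK mulmxA.
by move/eqP; rewrite paddr_eq0 ?sqnorm_ge0 // => /andP[/eqP/sqnorm_eq0/S_inj].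
Qed.

Lemma iteration_gram : T ^t* *m T = 1%:M - R ^t* *m R.
Proof.
have Ku := splitting_unit; set M := invmx K.
have KM : K *m M = 1%:M by rewrite mulmxV.
have MtKt : M ^t* *m K ^t* = 1%:M by rewrite -ctmxM KM trmx1 map_mx1.
have SS : S *m S = K + K ^t* - A *m A ^t* by rewrite splitting addrK.
have RtR : R ^t* *m R =
    A ^t* *m M ^t* *m A + A ^t* *m M *m A - A ^t* *m M ^t* *m A *m (A ^t* *m M *m A).
  rewrite !ctmxM S_herm !mulmxA -[_ *m S *m S]mulmxA -[_ *m (S *m S)]mulmxA SS.
  rewrite !(mulmxDr, mulmxDl, mulmxN, mulNmx) !mulmxA.
  rewrite -[A ^t* *m M ^t* *m K *m M]mulmxA KM mulmx1.
  by rewrite -[A ^t* *m M ^t* *m K ^t*]mulmxA MtKt mulmx1.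
rewrite RtR ctmxD ctmxN trmx1 map_mx1 !ctmxM trmxCK.
rewrite !(mulmxBr, mulmxBl, mulmx1, mul1mx) !mulmxA.
by rewrite !opprB !opprD !addrA; congr (_ - _); rewrite addrAC.
Qed.

Lemma sqnorm_iteration (x : 'cV[C]_n) : sqnorm (T *m x) = sqnorm x - sqnorm (R *m x).
Proof.
have entryB (P Q : 'M[C]_1) : (P - Q) 0 0 = P 0 0 - Q 0 0 by rewrite !mxE.
by rewrite (sqnormM R x) [LHS]sqnormM iteration_gram mulmxBr mulmxBl mulmx1 entryB.
Qed.

(* R and A have the same kernel, S and K^-1 being injective. *)
Lemma splitting_kernel (z : 'cV[C]_n) : R *m z = 0 -> A *m z = 0.
Proof.
rewrite -!mulmxA => /S_inj MAz0.
by rewrite -[A *m z]mul1mx -(mulmxV splitting_unit) -mulmxA MAz0 mulmx0.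
Qed.

Variable s : C.
Hypothesis svR : smallest_nonzero_sv R s.

(* Since ||R x|| <= ||x|| by the key identity, the singular values of R are at most 1. *)
Lemma sv_le1 : s ^+ 2 <= 1.
Proof.
have [s_gt0 /eigenvalueP[w wH w_neq0] _] := svR.
set z := w ^t*.
have z_gt0 : 0 < sqnorm z.
  rewrite lt_def sqnorm_ge0 andbT; apply: contra_neq w_neq0 => /sqnorm_eq0 z0.
  by rewrite -[w]trmxCK -/z z0 ctmx0.
have Rz : sqnorm (R *m z) = s ^+ 2 * sqnorm z.
  rewrite sqnormM /z trmxCK /ctmx in wH *; rewrite wH -scalemxAl mxE.
  by rewrite /sqnorm trmxCK.
have := sqnorm_ge0 (T *m z); rewrite sqnorm_iteration Rz.
by rewrite -{1}[sqnorm z]mul1r -mulrBl pmulr_lge0 // subr_ge0.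
Qed.

(* On the range of A^*, which is orthogonal to ker R = ker A, the iteration
   contracts the squared norm by the factor 1 - s^2. *)
Lemma iteration_contracts (y : 'cV[C]_N) :
  sqnorm (T *m (A ^t* *m y)) <= (1 - s ^+ 2) * sqnorm (A ^t* *m y).
Proof.
rewrite sqnorm_iteration mulrBl mul1r lerB // sv_lower_bound // => z /splitting_kernel Az.
by rewrite mulmxA -ctmxM Az ctmx0 mul0mx.
Qed.

Lemma iteration_contracts_norm (y : 'cV[C]_N) :
  vnorm (T *m (A ^t* *m y)) <= sqrtC (1 - s ^+ 2) * vnorm (A ^t* *m y).
Proof.
have s_le1 : 0 <= 1 - s ^+ 2 by rewrite subr_ge0 sv_le1.
rewrite !vnormE -sqrtCM ?nnegrE ?sqnorm_ge0 // ler_sqrtC ?nnegrE ?sqnorm_ge0 //.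
  exact: iteration_contracts.
by rewrite mulr_ge0 ?sqnorm_ge0.
Qed.

End SplittingIteration.

Section AffineRecursion.
Variables (F : numFieldType) (a : nat -> F) (rho delta : F).
Hypotheses (rho_ge0 : 0 <= rho) (rho_lt1 : rho < 1) (delta_ge0 : 0 <= delta).
Hypothesis a0 : a 0 = 0.
Hypothesis a_step : forall k, a k.+1 <= rho * a k + delta.

(* The fixed point delta / (1 - rho) of x |-> rho x + delta bounds the sequence. *)
Lemma affine_recursion_uniform k : a k <= delta / (1 - rho).
Proof.
have rho_neq1 : 1 - rho != 0 by rewrite subr_eq0 eq_sym lt_eqF.
elim: k => [|k IH]; first by rewrite a0 divr_ge0 // subr_ge0 ltW.
apply: le_trans (a_step k) _.
have -> : delta / (1 - rho) = rho * (delta / (1 - rho)) + delta by field.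
by rewrite lerD2r ler_wpM2l.
Qed.

Lemma affine_recursion_linear k : a k.+1 <= delta * (1 + k%:R * rho).
Proof.
elim: k => [|k IH].
  by apply: le_trans (a_step 0) _; rewrite a0 mulr0 add0r mul0r addr0 mulr1.
apply: le_trans (a_step k.+1) _.
apply: le_trans (_ : rho * (delta * (1 + k%:R * rho)) + delta <= _).
  by rewrite lerD2r ler_wpM2l.
rewrite -subr_ge0.
have -> : delta * (1 + k.+1%:R * rho) - (rho * (delta * (1 + k%:R * rho)) + delta)
    = delta * k%:R * rho * (1 - rho) by rewrite -natr1; ring.
by rewrite !mulr_ge0 ?ler0n // subr_ge0 ltW.
Qed.

(* For k >= 2 the linear bound lies below the secant delta (1 + rho) k / 2. *)
Lemma affine_recursion_secant k : (2 <= k)%N -> a k <= delta * (1 + rho) / 2 * k%:R.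
Proof.
case: k => [|[|j]] // _; apply: le_trans (affine_recursion_linear j.+1) _.
rewrite -subr_ge0.
have -> : delta * (1 + rho) / 2 * j.+2%:R - delta * (1 + j.+1%:R * rho)
    = delta * j%:R * (1 - rho) / 2 by rewrite -!natr1; field.
by rewrite divr_ge0 ?ler0n // !mulr_ge0 ?ler0n // subr_ge0 ltW.
Qed.

End AffineRecursion.

Section RegularizedBlockKaczmarz.
Variables (C : numClosedFieldType) (m n : nat) (r : 'I_m -> nat).
Variable Ab : forall j : 'I_m, 'M[C]_(r j, n).

Local Notation A := (stackA Ab).

(* The splitting identity, a block computation: for real g,
   (D_g + L) + (D_g + L)^* = D_(2g) + A A^*, since the diagonal blocks of
   A A^* are A_i A_i^* and its off-diagonal blocks are A_i A_j^*. *)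
Lemma splitting_identity (g : C) : g^* = g ->
  (Dg Ab g + Lblk Ab) + (Dg Ab g + Lblk Ab) ^t* = Dg Ab (2 * g) + A *m A ^t*.
Proof.
move=> g_real; rewrite /Dg /Lblk /stackA /mxdiag /ctmx.
have ctmx_mxblock p q (p_ : 'I_p -> nat) (q_ : 'I_q -> nat)
    (B_ : forall i j, 'M[C]_(p_ i, q_ j)) :
    (\mxblock_(i, j) B_ i j) ^t* = \mxblock_(i, j) (B_ j i) ^t*.
  by apply/matrixP => i j; rewrite !mxE.
have ctmx_mxcol (B_ : forall i, 'M[C]_(r i, n)) :
    (\mxcol_i B_ i) ^t* = \mxrow_i (B_ i) ^t*.
  by apply/matrixP => i j; rewrite !mxE.
rewrite ctmx_mxcol mul_mxcol_mxrow ctmxD !ctmx_mxblock -!mxblockD.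
apply/eq_mxblock => i j; case: (eqVneq i j) => [<- | neq_ij].
  rewrite !conform_mx_id ltnn !addr0 ctmxD ctmxM trmxCK ctmx_scalar // ctmx0 addr0.
  rewrite mulr_natl mulr2n (raddfD scalar_mx) addrACA -!addrA.
  by congr (_ + (_ + _)); rewrite addrC.
rewrite ctmx0 !add0r; case: (ltngtP i j) => [lt_ij | lt_ji | /val_inj eq_ij].
- by rewrite add0r ctmxM trmxCK.
- by rewrite ctmx0 addr0.
- by rewrite eq_ij eqxx in neq_ij.
Qed.

Variables (g : C) (p pt : 'cV[C]_(\sum_j r j)).

Local Notation err k := (rbk_iter Ab g pt k - rbk_iter Ab g p k).

Lemma rbk_error_step k :
  err k.+1 = (1%:M - A ^t* *m Mg Ab g *m A) *m err k + A ^t* *m Mg Ab g *m (pt - p).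
Proof. by rewrite /= /ctmx !(mulmxDr, mulmxN) opprD addrACA. Qed.

Lemma rbk_error_range k : exists y, err k = A ^t* *m y.
Proof.
elim: k => [|k [y ey]]; first by exists 0; rewrite subrr mulmx0.
exists (y - Mg Ab g *m A *m (A ^t* *m y) + Mg Ab g *m (pt - p)).
by rewrite rbk_error_step ey !(mulmxDl, mulmxDr, mulmxN, mulNmx) mul1mx !mulmxA.
Qed.

End RegularizedBlockKaczmarz.

Theorem corollary3p3 (C : numClosedFieldType) (m n : nat) (r : 'I_m -> nat)
    (Ab : forall j : 'I_m, 'M[C]_(r j, n))
    (gamma : C) (p pt : 'cV[C]_(\sum_j r j))
    (S : 'M[C]_(\sum_j r j)) (sigma : C) :
  row_free (stackA Ab) ->
  0 < gamma ->
  herm_posdef S ->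
  S *m S = Dg Ab (2 * gamma) ->
  smallest_nonzero_sv (S *m Mg Ab gamma *m stackA Ab) sigma ->
  let delta := vnorm (ctmx (stackA Ab) *m Mg Ab gamma *m (pt - p)) in
  let e := fun k => rbk_iter Ab gamma pt k - rbk_iter Ab gamma p k in
  (forall k : nat, (2 <= k)%N -> k%:R <= 2 / sigma ^+ 2 ->
     vnorm (e k) <= delta * sigma ^+ 2 / (2 * (1 - sqrtC (1 - sigma ^+ 2))) * k%:R)
  /\
  (forall k : nat, 2 / sigma ^+ 2 < k%:R ->
     vnorm (e k) <= delta / (1 - sqrtC (1 - sigma ^+ 2))).
Proof.
move=> _ gamma_gt0 S_pd S_sq svR delta e; have [S_herm _] := S_pd.
have split : (Dg Ab gamma + Lblk Ab) + (Dg Ab gamma + Lblk Ab) ^t* =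
    S *m S + stackA Ab *m (stackA Ab) ^t*.
  by rewrite S_sq splitting_identity // conj_Creal // gtr0_real.
have S_inj v := @posdef_inj _ _ S v S_pd.
set rho := sqrtC (1 - sigma ^+ 2).
have rho_ge0 : 0 <= rho by rewrite sqrtC_ge0 subr_ge0 (sv_le1 S_herm S_inj split svR).
have rho_sq : rho ^+ 2 = 1 - sigma ^+ 2 by rewrite sqrtCK.
have rho_lt1 : rho < 1.
  case: svR => sigma_gt0 _ _.
  by rewrite -ltr_sqr ?nnegrE // expr1n rho_sq ltrBlDr ltrDl exprn_gt0.
have e0 : vnorm (e 0) = 0 by rewrite /e subrr vnormE /sqnorm mulmx0 mxE sqrtC0.
have e_step k : vnorm (e k.+1) <= rho * vnorm (e k) + delta.
  have [y ey] := rbk_error_range Ab gamma p pt k.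
  rewrite /e rbk_error_step ey; apply: le_trans (vnormD _ _) _.
  by rewrite lerD2r (iteration_contracts_norm S_herm S_inj split svR).
have delta_ge0 : 0 <= delta by exact: vnorm_ge0.
split => [k k_ge2 _ | k _];
  last exact: (affine_recursion_uniform rho_ge0 rho_lt1 delta_ge0 e0 e_step).
have rho_neq1 : 1 - rho != 0 by rewrite subr_eq0 eq_sym lt_eqF.
have -> : delta * sigma ^+ 2 / (2 * (1 - rho)) = delta * (1 + rho) / 2.
  by rewrite -[sigma ^+ 2](subKr 1) -rho_sq; field.
exact: (affine_recursion_secant rho_ge0 rho_lt1 delta_ge0 e0 e_step).
Qed.
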